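(* Let $n\ge2$ and let $\lambda_1>\lambda_2>\dots>\lambda_n$ be distinct real numbers, and let $\mu_1>\dots>\mu_{n-1}$ be the critical points of $q(x)=\prod_{j=1}^n(x-\lambda_j)$ (so $\lambda_k>\mu_k>\lambda_{k+1}$). Define the $(n-1)\times n$ matrix $W$ by $$W_{kj}:=\frac{(\mu_k-\lambda_j)^{-2}}{\sum_{i=1}^n(\mu_k-\lambda_i)^{-2}}.$$ Then each $\mu_k$ is a smooth function of $(\lambda_1,\dots,\lambda_n)$ on the set of strictly decreasing tuples, with $\partial\mu_k/\partial\lambda_j=W_{kj}>0$ for all $k,j$; moreover each row of $W$ sums to $1$, each column of $W$ sums to $\frac{n-1}{n}$, and $\mu_k=\sum_{j=1}^n W_{kj}\lambda_j$ for every $k=1,\dots,n-1$. *)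

From HB Require Import structures.
From mathcomp Require Import all_boot all_order all_algebra.
From mathcomp Require Import all_classical all_reals all_analysis.
Set Implicit Arguments. Unset Strict Implicit. Unset Printing Implicit Defensive.
Import Order.TTheory GRing.Theory Num.Theory.
Import numFieldNormedType.Exports.
Local Open Scope ring_scope.
Local Open Scope classical_set_scope.

Section Defs.
Variable R : realType.

(* lamc l i = lambda_{i+1} (0-based coordinate i of the row vector l), 0 if out of range *)
Definition lamc (n : nat) (l : 'rV[R]_n) (i : nat) : R :=
  match insub i with Some j => l 0 j | None => 0 end.

Definition decr_tuples (n : nat) : set 'rV[R]_n :=
  [set l | forall i j : 'I_n, (i < j)%N -> l 0 j < l 0 i].

Definition lam_poly (n : nat) (l : 'rV[R]_n) : {poly R} :=
  \prod_(j < n) ('X - (l 0 j)%:P).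

(* W_{kj} as a function of m = mu_k *)
Definition Wcoef (n : nat) (m : R) (l : 'rV[R]_n) (j : 'I_n) : R :=
  (m - l 0 j) ^- 2 / \sum_(i < n) (m - l 0 i) ^- 2.

Definition ebasis (n : nat) (j : 'I_n) : 'rV[R]_n := delta_mx 0 j.

Fixpoint Ck_on (n : nat) (m : nat) (U : set 'rV[R]_n) (f : 'rV[R]_n -> R) : Prop :=
  match m with
  | 0 => forall x, U x -> {for x, continuous f}
  | m'.+1 => (forall x, U x -> {for x, continuous f}) /\
             forall v : 'rV[R]_n, (forall x, U x -> derivable f x v) /\
                                  Ck_on m' U ('D_v f)
  end.

Definition smooth_on (n : nat) (U : set 'rV[R]_n) (f : 'rV[R]_n -> R) : Prop :=
  forall m, Ck_on m U f.

End Defs.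

(* The k-th critical point mu_k of q is the unique zero, in the gap
   (lambda_{k+1}, lambda_k), of the logarithmic derivative
   q'/q (x) = sum_j 1 / (x - lambda_j); it exists because q' changes sign on the
   gap, and it is unique and continuous in lambda because q'/q is strictly
   decreasing there.  Subtracting the equations q'/q = 0 at lambda and at a
   nearby lambda' gives
     (mu(lambda') - mu(lambda)) sum_j 1/P_j = sum_j (lambda'_j - lambda_j)/P_j,
   with P_j = (mu(lambda) - lambda_j) (mu(lambda') - lambda'_j) tending to
   (mu - lambda_j)^2, so the gradient of mu_k is the row W_k.  This gradient is
   a rational function of mu_k and lambda with nonvanishing denominators, and
   such functions are closed under directional derivation, hence smoothness.
   Row sums and mu_k = sum_j W_kj lambda_j follow from q'/q (mu_k) = 0; the
   column sums come from differentiating Vieta's relation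
   n sum_k mu_k = (n - 1) sum_j lambda_j between the roots of q' and of q. *)

From HB Require Import structures.
From mathcomp Require Import all_boot all_order all_algebra.
From mathcomp Require Import all_classical all_reals all_analysis.
From mathcomp Require Import ring lra.
From mathcomp Require polyrcf.
Import Order.TTheory GRing.Theory Num.Theory.
Import numFieldNormedType.Exports.
Local Open Scope ring_scope.
Local Open Scope classical_set_scope.
Set Implicit Arguments. Unset Strict Implicit. Unset Printing Implicit Defensive.

Lemma horner_deriv_prod_XsubC (R : fieldType) m (c : 'I_m -> R) x :
  (forall j, x != c j) ->
  (\prod_(j < m) ('X - (c j)%:P))^`().[x] =
    (\prod_(j < m) ('X - (c j)%:P)).[x] * \sum_(j < m) (x - c j)^-1.
Proof.
elim: m c => [|m IH] c xc; first by rewrite !big_ord0 derivC horner0 mulr0.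
rewrite big_ord_recr derivM derivXsubC mulr1 hornerD hornerM IH // big_ord_recr.
have xcm : x - c ord_max != 0 by rewrite subr_eq0.
by rewrite /= !hornerM hornerXsubC; field.
Qed.

Lemma horner_deriv_prod_XsubC_root (R : comNzRingType) m (c : 'I_m -> R) a :
  (\prod_(j < m) ('X - (c j)%:P))^`().[c a] = \prod_(j < m | j != a) (c a - c j).
Proof.
rewrite (bigD1 a) //= derivM derivXsubC mul1r hornerD !hornerM hornerXsubC subrr.
by rewrite mul0r addr0 horner_prod; apply: eq_bigr => j _; rewrite hornerXsubC.
Qed.

Lemma sum_roots_deriv (R : numFieldType) (rs ms : seq R) :
  size rs = (size ms).+1 -> uniq ms ->
  all (root (deriv (\prod_(r <- rs) ('X - r%:P)))) ms ->
  (size rs)%:R * \sum_(m <- ms) m = (size ms)%:R * \sum_(r <- rs) r.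
Proof.
move=> rsE ums; set q : {poly R} := \prod_(r <- rs) _ => rootsq.
have q_monic : q \is monic by exact: monic_prod_XsubC.
have size_q : size q = (size rs).+1 by exact: size_prod_XsubC.
have lead_q : q`_(size rs) = 1 by rewrite -(monicP q_monic) lead_coefE size_q.
have dqE : deriv q = (size rs)%:R *: \prod_(m <- ms) ('X - m%:P).
  have lead_dq : (deriv q)`_(size ms) = (size rs)%:R by rewrite coef_deriv -rsE lead_q.
  have size_dq : size (deriv q) = size rs.
    apply/anti_leq/andP; split.
      by rewrite -ltnS -size_q lt_size_deriv ?monic_neq0.
    rewrite rsE ltnNge; apply/negP => small; move: lead_dq.
    by rewrite nth_default // => /esym/eqP; rewrite pnatr_eq0 rsE.
  have ums' : uniq_roots ms by rewrite uniq_rootsE.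
  rewrite {1}(all_roots_prod_XsubC (etrans size_dq rsE) rootsq ums').
  by congr (_ *: _); rewrite lead_coefE size_dq -lead_dq rsE.
case: ms => [|m ms] in rsE ums rootsq dqE *; first by rewrite !big_nil mulr0 mul0r.
have qc : q`_(size (m :: ms)) = - \sum_(r <- rs) r by rewrite -coefPn_prod_XsubC ?rsE.
have := congr1 (fun p : {poly R} => p`_(size ms)) dqE.
rewrite coefZ coef_deriv qc coefPn_prod_XsubC // mulNrn mulrN => /oppr_inj <-.
by rewrite mulr_natl.
Qed.

Lemma sumr_gt0 (R : numDomainType) m (F : 'I_m -> R) (i0 : 'I_m) :
  (forall i, 0 < F i) -> 0 < \sum_(i < m) F i.
Proof.
move=> F_gt0; rewrite (bigD1 i0) //= ltr_pwDl //.
by apply: sumr_ge0 => i _; exact: ltW.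
Qed.

Lemma derive_linear (R : realType) (V : normedModType R) (f : V -> R) :
  (forall h v l, f (h *: v + l) = h * f v + f l) ->
  forall l v, derivable f l v /\ 'D_v f l = f v.
Proof.
move=> f_lin l v.
suff dq : (fun h : R => h^-1 *: (f (h *: v + l) - f l)) @ 0^' --> f v.
  by split; [apply/cvg_ex; exists (f v) | exact: cvg_lim].
apply: cvg_near_cst; near=> h.
have h0 : h != 0 by near: h; exact: nbhs_dnbhs_neq.
by rewrite f_lin addrK [LHS]mulrA mulVf ?mul1r.
Unshelve. all: by end_near.
Qed.

Lemma Ck_on_eq (R : realType) n m (U : set 'rV[R]_n) (f g : 'rV[R]_n -> R) :
  open U -> (forall l, U l -> f l = g l) -> Ck_on m U f -> Ck_on m U g.
Proof.
move=> U_open.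
have near_eq (f' g' : 'rV[R]_n -> R) l : (forall l, U l -> f' l = g' l) -> U l ->
    \near l, f' l = g' l.
  by move=> fg Ul; apply: filterS (open_nbhs_nbhs (conj U_open Ul)) => x /fg.
have cont_eq (f' g' : 'rV[R]_n -> R) l : (forall l, U l -> f' l = g' l) -> U l ->
    {for l, continuous f'} -> {for l, continuous g'}.
  move=> fg Ul cf; rewrite /prop_for /continuous_at -(fg l Ul).
  by apply: cvg_trans cf; exact: near_eq_cvg (near_eq _ _ _ fg Ul).
elim: m f g => [|m IH] f g fg /=.
  by move=> cf l Ul; exact: cont_eq fg Ul (cf l Ul).
move=> [cf dv]; split=> [l Ul|v]; first exact: cont_eq fg Ul (cf l Ul).
have [derf Ckf] := dv v; split=> [l Ul|].
  exact: near_eq_derivable (near_eq _ _ _ fg Ul) (derf l Ul).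
by apply: IH Ckf => l Ul; exact: near_eq_derive (near_eq _ _ _ fg Ul).
Qed.

Section GeneratedAlgebra.
Variables (R : realType) (n : nat) (U : set 'rV[R]_n) (mu : 'rV[R]_n -> R).
Hypothesis U_open : open U.

Inductive generated : ('rV[R]_n -> R) -> Prop :=
  | generated_mu : generated mu
  | generated_coord j : generated (fun l => l 0 j)
  | generated_cst c : generated (cst c)
  | generatedD f g : generated f -> generated g -> generated (f + g)
  | generatedN f : generated f -> generated (- f)
  | generatedM f g : generated f -> generated g -> generated (f * g)
  | generatedV f : generated f -> (forall l, U l -> f l != 0) ->
      generated (fun l => (f l)^-1).

Lemma generated_sum m (F : 'I_m -> 'rV[R]_n -> R) :
  (forall i, generated (F i)) -> generated (\sum_(i < m) F i).
Proof. by move=> genF; apply: big_ind => //; [exact: generated_cst | exact: generatedD]. Qed.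

Hypothesis mu_cont : forall l, U l -> {for l, continuous mu}.
Hypothesis mu_derive : forall v, exists2 g, generated g &
  forall l, U l -> derivable mu l v /\ 'D_v mu l = g l.

Lemma generated_continuous f : generated f -> forall l, U l -> {for l, continuous f}.
Proof.
move=> + l Ul; elim=> {f} [|j|c|f g _ cf _ cg|f _ cf|f g _ cf _ cg|f _ cf f0].
- exact: mu_cont.
- exact: coord_continuous.
- exact: cst_continuous.
- exact: continuousD.
- exact: continuousN.
- exact: continuousM.
- exact: continuousV (f0 l Ul) cf.
Qed.

Lemma generated_derive f v : generated f -> exists2 g, generated g &
  forall l, U l -> derivable f l v /\ 'D_v f l = g l.
Proof.
elim=> {f} [|j|c|f g _ [f' gf' df] _ [g' gg' dg]|f _ [f' gf' df]|
             f g gf [f' gf' df] gg [g' gg' dg]|f gf [f' gf' df] f0].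
- exact: mu_derive.
- exists (cst (v 0 j)); first exact: generated_cst.
  by move=> l _; apply: derive_linear => h w x; rewrite !mxE.
- exists (cst 0); first exact: generated_cst.
  by move=> l _; split; [exact: derivable_cst | exact: derive_cst].
- exists (f' + g'); first exact: generatedD.
  move=> l Ul; have [[df1 df2] [dg1 dg2]] := (df l Ul, dg l Ul).
  by split; [exact: derivableD | rewrite deriveD // df2 dg2].
- exists (- f'); first exact: generatedN.
  move=> l Ul; have [df1 df2] := df l Ul.
  by split; [exact: derivableN | rewrite deriveN // df2].
- exists (f * g' + g * f'); first by apply: generatedD; exact: generatedM.
  move=> l Ul; have [[df1 df2] [dg1 dg2]] := (df l Ul, dg l Ul).
  by split; [exact: derivableM | rewrite deriveM // df2 dg2].
- pose fV := fun l => (f l)^-1.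
  exists (- (fV * fV) * f').
    by apply/generatedM/gf'/generatedN/generatedM; exact: generatedV.
  move=> l Ul; have [df1 df2] := df l Ul.
  split; first exact: derivableV (f0 l Ul) df1.
  by rewrite deriveV ?f0 // df2 -exprVn expr2.
Qed.

Lemma generated_smooth f : generated f -> smooth_on U f.
Proof.
move=> + m; elim: m f => [|m IH] f genf /=; first exact: generated_continuous.
split=> [|v]; first exact: generated_continuous.
have [g geng dfg] := generated_derive v genf.
split=> [l Ul|]; first by have [] := dfg l Ul.
by apply: Ck_on_eq U_open _ (IH g geng) => l Ul; have [_ ->] := dfg l Ul.
Qed.

End GeneratedAlgebra.

Section CriticalPoints.
Variables (R : realType) (n : nat).
Implicit Types (l : 'rV[R]_n) (x : R).
Local Notation U := (@decr_tuples R n).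

Definition logder l x : R := \sum_(j < n) (x - l 0 j)^-1.

Lemma inv_sqr_gt0 x : x != 0 -> 0 < x ^- 2.
Proof. by move=> x0; rewrite invr_gt0 exprn_even_gt0 //= x0. Qed.

Lemma sum_inv_sqr_gt0 l x (i0 : 'I_n) : (forall j, x - l 0 j != 0) ->
  0 < \sum_(j < n) (x - l 0 j) ^- 2.
Proof.
by move=> xl; apply: (sumr_gt0 i0) => j; exact: inv_sqr_gt0.
Qed.

Lemma Wcoef_gt0 l x j : (forall i, x - l 0 i != 0) -> 0 < Wcoef x l j.
Proof. by move=> xl; rewrite divr_gt0 ?inv_sqr_gt0 ?(sum_inv_sqr_gt0 j). Qed.

Lemma sum_Wcoef l x (i0 : 'I_n) : (forall i, x - l 0 i != 0) ->
  \sum_(j < n) Wcoef x l j = 1.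
Proof. by move=> xl; rewrite -mulr_suml divff // gt_eqF ?(sum_inv_sqr_gt0 i0). Qed.

Lemma sum_Wcoef_mul l x (c : 'I_n -> R) :
  \sum_(j < n) Wcoef x l j * c j =
  (\sum_(j < n) c j * (x - l 0 j) ^- 2) / \sum_(j < n) (x - l 0 j) ^- 2.
Proof. by rewrite mulr_suml; apply: eq_bigr => j _; rewrite /Wcoef mulrAC [_ * c j]mulrC. Qed.

Lemma Wcoef_barycenter l x (i0 : 'I_n) : (forall i, x - l 0 i != 0) ->
  logder l x = 0 -> x = \sum_(j < n) Wcoef x l j * l 0 j.
Proof.
move=> xl lx0.
have : \sum_(j < n) Wcoef x l j * (x - l 0 j) = logder l x / \sum_j (x - l 0 j) ^- 2.
  rewrite sum_Wcoef_mul; congr (_ / _); apply: eq_bigr => j _.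
  by rewrite expr2 invfM mulrA mulfV ?mul1r.
rewrite lx0 mul0r (eq_bigr (fun j => Wcoef x l j * x - Wcoef x l j * l 0 j)) => [|j _]; last by rewrite mulrBr.
by rewrite sumrB -mulr_suml (sum_Wcoef i0) // mul1r => /eqP; rewrite subr_eq0 => /eqP.
Qed.

Lemma decr_tuples_le l : U l -> forall i j : 'I_n, (i <= j)%N -> l 0 j <= l 0 i.
Proof. by move=> Ul i j; rewrite leq_eqVlt => /orP[/eqP/val_inj->//|/Ul/ltW]. Qed.

Lemma lamcE l (i : 'I_n) : lamc l i = l 0 i.
Proof. by rewrite /lamc; case: insubP => [j _ /val_inj->|]; rewrite ?ltn_ord. Qed.

Lemma decr_tuples_open : open U.
Proof.
rewrite openE => l Ul.
have near_lt (i j : 'I_n) : \forall l' \near l, (i < j)%N -> (l' : 'rV[R]_n) 0 j < l' 0 i.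
  have [ij|ji] := ltnP i j; last by near=> l'.
  have lij : 0 < l 0 i - l 0 j by rewrite subr_gt0 Ul.
  near=> l' => _; rewrite -subr_gt0; near: l'.
  exact: cvgr_gt _ (cvgB (@coord_continuous R 1 n 0 i l) (@coord_continuous R 1 n 0 j l)) 0 lij.
have nF : Filter (nbhs l) by exact: _.
have := filter_forall nF (fun i => filter_forall nF (near_lt i)).
by apply: filterS => l' lt_l' i j; exact: lt_l'.
Unshelve. all: by end_near.
Qed.

Lemma logder_continuous l x : (forall j, x - l 0 j != 0) ->
  {for l, continuous (logder^~ x)}.
Proof.
move=> xl; have nF : Filter (nbhs l) by exact: _.
apply: (cvg_big add_continuous nF) => j _.
exact: cvgV (xl j) (cvgB (cvg_cst x) (@coord_continuous R 1 n 0 j l)).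
Qed.

Lemma logder_sub l l' x x' : (forall j, x - l 0 j != 0) -> (forall j, x' - l' 0 j != 0) ->
  logder l' x' - logder l x =
  \sum_(j < n) ((x - x') + (l' 0 j - l 0 j)) / ((x - l 0 j) * (x' - l' 0 j)).
Proof.
move=> xl xl'; rewrite /logder -sumrB; apply: eq_bigr => j _.
by field; rewrite xl xl'.
Qed.

Definition mu (k : nat) l : R :=
  xget 0 [set x | lamc l k.+1 < x < lamc l k /\ logder l x = 0].

Section Gap.
Variables (k : nat) (hk : (k.+1 < n)%N).
Let a : 'I_n := Ordinal (ltnW hk).
Let b : 'I_n := Ordinal hk.

Definition in_gap l x := lamc l k.+1 < x < lamc l k.

Lemma in_gapE l x : in_gap l x = (l 0 b < x < l 0 a).
Proof. by rewrite /in_gap (lamcE l a) (lamcE l b). Qed.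

Lemma gap_lt l x (j : 'I_n) : U l -> in_gap l x ->
  ((j <= k)%N -> x < l 0 j) /\ ((k < j)%N -> l 0 j < x).
Proof.
rewrite in_gapE => Ul /andP[bx xa]; split=> jk.
  by apply: lt_le_trans xa _; exact: decr_tuples_le.
by apply: le_lt_trans bx; exact: decr_tuples_le.
Qed.

Lemma gap_subr_neq0 l x (j : 'I_n) : U l -> in_gap l x -> x - l 0 j != 0.
Proof.
move=> Ul gx; rewrite subr_eq0; have [xl lx] := gap_lt j Ul gx.
by case: (leqP j k) => jk; [rewrite lt_eqF ?xl | rewrite gt_eqF ?lx].
Qed.

Lemma gap_mul_gt0 l l' x x' (j : 'I_n) : U l -> U l' -> in_gap l x -> in_gap l' x' ->
  0 < (x - l 0 j) * (x' - l' 0 j).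
Proof.
move=> Ul Ul' gx gx'; have [xl lx] := gap_lt j Ul gx; have [xl' lx'] := gap_lt j Ul' gx'.
case: (leqP j k) => jk; first by rewrite nmulr_rgt0 subr_lt0 ?xl ?xl'.
by rewrite mulr_gt0 // subr_gt0 ?lx ?lx'.
Qed.

Lemma logder_decr l x y : U l -> in_gap l x -> in_gap l y -> x < y ->
  logder l y < logder l x.
Proof.
move=> Ul gx gy xy; apply: ltr_sum => [|j _].
  by apply/hasP; exists a; rewrite ?mem_index_enum.
have := gap_mul_gt0 j Ul Ul gx gy; rewrite -subr_gt0.
have [x0 y0] := (gap_subr_neq0 j Ul gx, gap_subr_neq0 j Ul gy).
have -> : (x - l 0 j)^-1 - (y - l 0 j)^-1 = (y - x) / ((x - l 0 j) * (y - l 0 j)).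
  by field; rewrite x0 y0.
by move=> P0; rewrite divr_gt0 // subr_gt0.
Qed.

Lemma outside_gap_mul_gt0 l (j : 'I_n) : U l -> j != a -> j != b ->
  0 < (l 0 b - l 0 j) * (l 0 a - l 0 j).
Proof.
move=> Ul ja jb; have lba : l 0 b < l 0 a by exact: Ul.
have [jk|kj] := ltnP j k.
  have laj : l 0 a < l 0 j by exact: Ul.
  by rewrite nmulr_rgt0 ?subr_lt0 // (lt_trans lba).
have k1j : (k.+1 < j)%N.
  move: ja jb; rewrite -!val_eqE /= => ja jb.
  by rewrite ltn_neqAle eq_sym jb ltn_neqAle eq_sym ja kj.
have ljb : l 0 j < l 0 b by exact: Ul.
by rewrite mulr_gt0 // subr_gt0 // (lt_trans ljb).
Qed.

Lemma deriv_lam_poly_sign l : U l ->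
  (deriv (lam_poly l)).[l 0 b] * (deriv (lam_poly l)).[l 0 a] < 0.
Proof.
move=> Ul; have ba : b != a by rewrite -(inj_eq val_inj) /= gtn_eqF.
rewrite !horner_deriv_prod_XsubC_root (bigD1 a) 1?eq_sym //= [X in _ * X](bigD1 b) //=.
rewrite (eq_bigl (fun j => (j != a) && (j != b))) => [|j]; last by rewrite andbC.
rewrite mulrACA -big_split /= -opprB !mulNr -expr2 oppr_lt0.
rewrite mulr_gt0 ?exprn_gt0 ?subr_gt0 //; first exact: (Ul a b (ltnSn k)).
by apply: prodr_gt0 => j /andP[ja jb]; exact: outside_gap_mul_gt0.
Qed.

Lemma logder_root_exists l : U l -> exists x, in_gap l x /\ logder l x = 0.
Proof.
move=> Ul; have lba : l 0 b <= l 0 a by apply/ltW/Ul.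
have [x bxa rootx] := polyrcf.poly_ivtoo lba (deriv_lam_poly_sign Ul).
have gx : in_gap l x by move: bxa; rewrite in_itv /= in_gapE.
exists x; split => //; move: rootx.
rewrite /root /lam_poly horner_deriv_prod_XsubC => [|j]; last first.
  by rewrite -subr_eq0 gap_subr_neq0.
rewrite mulf_eq0 horner_prod prodf_seq_eq0 => /orP[/hasP[j _]|/eqP //].
by rewrite hornerXsubC (negbTE (gap_subr_neq0 j Ul gx)).
Qed.

Lemma mu_in_gap l : U l -> in_gap l (mu k l) /\ logder l (mu k l) = 0.
Proof. by move=> Ul; exact: (xgetPex 0 (logder_root_exists Ul)). Qed.

Lemma mu_gt_of_logder l x : U l -> in_gap l x -> 0 < logder l x -> x < mu k l.
Proof.
move=> Ul gx lx; have [gm lm0] := mu_in_gap Ul.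
case: (ltgtP x (mu k l)) => // [mx|xm]; last by move: lx; rewrite xm lm0 ltxx.
by have := logder_decr Ul gm gx mx; rewrite lm0 => /(lt_trans lx); rewrite ltxx.
Qed.

Lemma mu_lt_of_logder l x : U l -> in_gap l x -> logder l x < 0 -> mu k l < x.
Proof.
move=> Ul gx lx; have [gm lm0] := mu_in_gap Ul.
case: (ltgtP x (mu k l)) => // [xm|xm]; last by move: lx; rewrite xm lm0 ltxx.
by have := logder_decr Ul gx gm xm; rewrite lm0 => /(lt_trans lx); rewrite ltxx.
Qed.

Lemma mu_continuous l : U l -> {for l, continuous (mu k)}.
Proof.
move=> Ul; have [gm lm0] := mu_in_gap Ul; set m := mu k l in gm lm0 *.
have /andP[bm ma] : l 0 b < m < l 0 a by rewrite -in_gapE.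
have nF : Filter (nbhs l) by exact: _.
apply/cvgrPdist_lt => e e0.
pose d := Num.min e (Num.min (m - l 0 b) (l 0 a - m)) / 2.
have [d_gt0 d_lt_e d_lt_mb d_lt_am] : [/\ 0 < d, d < e, d < m - l 0 b & d < l 0 a - m].
  rewrite /d; set c := Num.min e _.
  have : 0 < c by rewrite !lt_min e0 !subr_gt0 bm.
  have : [/\ c <= e, c <= m - l 0 b & c <= l 0 a - m] by rewrite !ge_min !lexx !orbT.
  by case; split; lra.
have [gl gr] : in_gap l (m - d) /\ in_gap l (m + d) by rewrite !in_gapE; split; apply/andP; split; lra.
have logder_l : 0 < logder l (m - d) /\ logder l (m + d) < 0.
  by rewrite -lm0; split; apply: logder_decr => //; lra.
near=> l'.
have Ul' : U l' by near: l'; exact: open_nbhs_nbhs (conj decr_tuples_open Ul).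
have lb' : l' 0 b < m - d.
  by near: l'; apply: cvgr_lt (@coord_continuous R 1 n 0 b l) _ _; lra.
have la' : m + d < l' 0 a.
  by near: l'; apply: cvgr_gt (@coord_continuous R 1 n 0 a l) _ _; lra.
have [gl' gr'] : in_gap l' (m - d) /\ in_gap l' (m + d).
  by rewrite !in_gapE; split; apply/andP; split; lra.
have lo : m - d < mu k l'.
  apply: mu_gt_of_logder Ul' gl' _; near: l'.
  exact: cvgr_gt (logder_continuous (fun j => gap_subr_neq0 j Ul gl)) _ logder_l.1.
have hi : mu k l' < m + d.
  apply: mu_lt_of_logder Ul' gr' _; near: l'.
  exact: cvgr_lt (logder_continuous (fun j => gap_subr_neq0 j Ul gr)) _ logder_l.2.
by rewrite ltr_distlC -/m; apply/andP; split; lra.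
Unshelve. all: by end_near.
Qed.

Lemma mu_increment l l' : U l -> U l' ->
  (mu k l' - mu k l) * \sum_(j < n) ((mu k l - l 0 j) * (mu k l' - l' 0 j))^-1 =
  \sum_(j < n) (l' 0 j - l 0 j) / ((mu k l - l 0 j) * (mu k l' - l' 0 j)).
Proof.
move=> Ul Ul'; have [[gm lm0] [gm' lm0']] := (mu_in_gap Ul, mu_in_gap Ul').
have := logder_sub (fun j => gap_subr_neq0 j Ul gm) (fun j => gap_subr_neq0 j Ul' gm').
rewrite lm0 lm0' subrr; under eq_bigr do rewrite mulrDl.
rewrite big_split /= -mulr_sumr => /esym/eqP; rewrite addr_eq0 => /eqP incr.
by rewrite -opprB mulNr incr opprK.
Qed.

Lemma mu_derive l v : U l ->
  derivable (mu k) l v /\ 'D_v (mu k) l = \sum_(j < n) Wcoef (mu k l) l j * v 0 j.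
Proof.
move=> Ul; have [gm _] := mu_in_gap Ul; set m := mu k l in gm *.
suff dq : (fun h : R => h^-1 *: (mu k (h *: v + l) - m)) @ 0^' -->
    \sum_(j < n) Wcoef m l j * v 0 j.
  by split; [apply/cvg_ex; eexists; exact: dq | exact: cvg_lim dq].
pose P j (h : R) := (m - l 0 j) * (mu k (h *: v + l) - (h *: v + l) 0 j).
have line : (fun h : R => h *: v + l) @ 0^' --> l.
  rewrite -[X in _ --> X]add0r -[X in _ --> X + _](scale0r v).
  by apply: cvgD; [apply: cvgZ; [exact: cvg_within | exact: cvg_cst] | exact: cvg_cst].
have P_cvg j : P j h @[h --> 0^'] --> (m - l 0 j) ^+ 2.
  rewrite expr2; apply: cvgM; first exact: cvg_cst.
  apply: cvgB; first exact: cvg_comp line (mu_continuous Ul).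
  exact: cvg_comp line (@coord_continuous R 1 n 0 j l).
have mj0 j : (m - l 0 j) ^+ 2 != 0 by rewrite sqrf_eq0 gap_subr_neq0.
have S_gt0 : 0 < \sum_(j < n) 1 * (m - l 0 j) ^- 2.
  by apply: (sumr_gt0 a) => j; rewrite mul1r inv_sqr_gt0 ?gap_subr_neq0.
have sum_cvg (c : 'I_n -> R) :
    (\sum_(j < n) c j * (P j h)^-1) @[h --> 0^'] --> \sum_(j < n) c j * (m - l 0 j) ^- 2.
  apply: cvg_big => [|j _]; first exact: add_continuous.
  exact: cvgM (cvg_cst _) (cvgV (mj0 j) (P_cvg j)).
rewrite sum_Wcoef_mul [X in _ / X](eq_bigr (fun j => 1 * (m - l 0 j) ^- 2)) => [|j _]; last first.
  by rewrite mul1r.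
apply: cvg_trans (cvgM (sum_cvg (v 0)) (cvgV (lt0r_neq0 S_gt0) (sum_cvg (fun=> 1)))).
apply: near_eq_cvg; near=> h.
have h0 : h != 0 by near: h; exact: nbhs_dnbhs_neq.
have Ul' : U (h *: v + l).
  by near: h; exact: (line _ (open_nbhs_nbhs (conj decr_tuples_open Ul))).
have [gm' _] := mu_in_gap Ul'.
have PS_gt0 : 0 < \sum_(j < n) (P j h)^-1.
  by apply: (sumr_gt0 a) => j; rewrite invr_gt0 (gap_mul_gt0 j Ul Ul' gm gm').
have := mu_increment Ul Ul'; rewrite -/m.
have shiftE j : (h *: v + l) 0 j - l 0 j = h * v 0 j by rewrite !mxE addrK.
under [in RHS]eq_bigr => j _ do rewrite shiftE -mulrA.
rewrite -mulr_sumr => incr.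
rewrite /= [X in _ / X](eq_bigr (fun j => (P j h)^-1)) => [|j _]; last by rewrite mul1r.
rewrite -[_ - m](mulfK (lt0r_neq0 PS_gt0)) incr.
by rewrite /GRing.scale /= mulrA mulKf.
Unshelve. all: by end_near.
Qed.

Lemma mu_smooth : smooth_on U (mu k).
Proof.
apply: (generated_smooth decr_tuples_open mu_continuous) (generated_mu _ _) => v.
pose coord (j : 'I_n) (x : 'rV[R]_n) := x 0 j.
pose w j := fun x : 'rV[R]_n => (((mu k - coord j) * (mu k - coord j)) x)^-1.
have gen_w j : generated U (mu k) (w j).
  apply: generatedV => [|x Ux]; first by apply: generatedM;
    apply: generatedD (generated_mu _ _) (generatedN (generated_coord _ _ j)).
  by have [gm _] := mu_in_gap Ux; rewrite mulf_neq0 // gap_subr_neq0.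
exists ((\sum_j cst (v 0 j) * w j) * (fun x : 'rV[R]_n => ((\sum_j w j) x)^-1)).
  apply: generatedM; first by apply: generated_sum => j; exact: generatedM (generated_cst _ _ _) (gen_w j).
  apply: generatedV => [|x Ux]; first exact: generated_sum.
  have [gm _] := mu_in_gap Ux.
  by rewrite fct_sumE lt0r_neq0 // (sum_inv_sqr_gt0 a) // => j; exact: gap_subr_neq0.
move=> l Ul; have [dmu ->] := mu_derive v Ul; split => //.
by rewrite sum_Wcoef_mul /= !fct_sumE; congr (_ * _^-1).
Qed.

Lemma mu_root_deriv l : U l -> root (deriv (lam_poly l)) (mu k l).
Proof.
move=> Ul; have [gm lm0] := mu_in_gap Ul.
rewrite /root /lam_poly horner_deriv_prod_XsubC => [|j]; last first.
  by rewrite -subr_eq0 gap_subr_neq0.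
by rewrite -/(logder l _) lm0 mulr0.
Qed.

End Gap.

Lemma mu_lt l k k' (hk : (k.+1 < n)%N) (hk' : (k'.+1 < n)%N) : U l ->
  (k < k')%N -> mu k' l < mu k l.
Proof.
move=> Ul kk'; have [[gm _] [gm' _]] := (mu_in_gap hk Ul, mu_in_gap hk' Ul).
have [_ /(_ kk') lk'] := gap_lt hk (Ordinal (ltnW hk')) Ul gm.
by move: gm'; rewrite in_gapE => /andP[_ /lt_trans]; apply.
Qed.

Lemma sum_mu l : (0 < n)%N -> U l ->
  \sum_(k < n.-1) mu k l = (n.-1)%:R / n%:R * \sum_(j < n) l 0 j.
Proof.
move=> n_gt0 Ul; have hk (k : 'I_n.-1) : (k.+1 < n)%N by rewrite -ltn_predRL.
have size_enum m : size (index_enum 'I_m) = m by rewrite [index_enum _]unlock -enumT size_enum_ord.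
have n0 : n%:R != 0 :> R by rewrite pnatr_eq0 -lt0n.
have sumE : n%:R * \sum_(k < n.-1) mu k l = n.-1%:R * \sum_(j < n) l 0 j.
  have := @sum_roots_deriv R [seq l 0 j | j <- index_enum 'I_n]
    [seq mu k l | k : 'I_n.-1 <- index_enum 'I_n.-1].
  rewrite !size_map !size_enum !big_map; apply; first by rewrite prednK.
    rewrite map_inj_uniq ?index_enum_uniq // => k k' /eqP; apply: contraTeq => kk'.
    case: (ltngtP k k') => [lt|gt|/val_inj eq]; last by rewrite eq eqxx in kk'.
      by rewrite gt_eqF ?(mu_lt _ _ Ul lt).
    by rewrite lt_eqF ?(mu_lt _ _ Ul gt).
  by apply/allP => x /mapP[k _ ->]; exact: mu_root_deriv.
by apply: (mulfI n0); rewrite sumE; field.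
Qed.

Lemma sum_mul_ebasis (F : 'I_n -> R) j : \sum_(i < n) F i * ebasis R j 0 i = F j.
Proof.
rewrite (bigD1 j) //= big1 => [|i ij]; first by rewrite /ebasis mxE !eqxx mulr1 addr0.
by rewrite /ebasis mxE (negbTE ij) andbF mulr0.
Qed.

Lemma sum_Wcoef_mu l j : (0 < n)%N -> U l ->
  \sum_(k < n.-1) Wcoef (mu k l) l j = (n.-1)%:R / n%:R.
Proof.
move=> n_gt0 Ul; have hk (k : 'I_n.-1) : (k.+1 < n)%N by rewrite -ltn_predRL.
have dmu k := mu_derive (hk k) (ebasis R j) Ul.
pose c : R := (n.-1)%:R / n%:R.
transitivity (\sum_(k < n.-1) 'D_(ebasis R j) (mu k) l).
  by apply: eq_bigr => k _; have [_ ->] := dmu k; rewrite sum_mul_ebasis.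
rewrite -derive_sum => [|k]; last by have [] := dmu k.
rewrite (@near_eq_derive _ _ _ _ (fun x : 'rV[R]_n => \sum_(i < n) c * x 0 i)); last first.
  apply: filterS (open_nbhs_nbhs (conj decr_tuples_open Ul)) => x Ux.
  by rewrite fct_sumE sum_mu // mulr_sumr.
have lin h (v x : 'rV[R]_n) : \sum_(i < n) c * (h *: v + x) 0 i =
    h * \sum_(i < n) c * v 0 i + \sum_(i < n) c * x 0 i.
  rewrite (eq_bigr (fun i => h * (c * v 0 i) + c * x 0 i)) => [|i _].
    by rewrite big_split mulr_sumr.
  by rewrite !mxE; ring.
have [_ ->] := derive_linear lin l (ebasis R j).
by rewrite (sum_mul_ebasis (fun=> c)).
Qed.

End CriticalPoints.

Theorem mainTheorem4 (R : realType) (n : nat) (hn : (2 <= n)%N) :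
  exists mu : nat -> 'rV[R]_n -> R,
    (forall k : nat, (k < n.-1)%N ->
      [/\ (* mu k is the k-th critical point of q, lying in (lambda_{k+1}, lambda_k) *)
          forall l, decr_tuples l ->
            lamc l k.+1 < mu k l < lamc l k /\ (deriv (lam_poly l)).[mu k l] = 0,
          smooth_on (decr_tuples (R:=R) (n:=n)) (mu k),
          forall l, decr_tuples l -> forall j : 'I_n,
            [/\ derivable (mu k) l (ebasis R j),
                'D_(ebasis R j) (mu k) l = Wcoef (mu k l) l j
              & 0 < Wcoef (mu k l) l j],
          forall l, decr_tuples l -> \sum_(j < n) Wcoef (mu k l) l j = 1
        & forall l, decr_tuples l ->
            mu k l = \sum_(j < n) Wcoef (mu k l) l j * l 0 j]) /\
    (forall l, decr_tuples l -> forall j : 'I_n,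
       \sum_(k < n.-1) Wcoef (mu k l) l j = (n.-1)%:R / n%:R).
Proof.
have n_gt0 : (0 < n)%N by exact: ltnW.
exists (@mu R n); split=> [k|l Ul j]; last exact: sum_Wcoef_mu.
rewrite ltn_predRL => hk.
have mu_sub_neq0 (l : 'rV[R]_n) : decr_tuples l -> forall j, mu k l - l 0 j != 0.
  by move=> Ul j; have [gm _] := mu_in_gap hk Ul; exact: gap_subr_neq0 gm.
split=> [l Ul | | l Ul j | l Ul | l Ul].
- by have [gm _] := mu_in_gap hk Ul; split=> //; exact/eqP/mu_root_deriv.
- exact: mu_smooth.
- have [dmu ->] := mu_derive hk (ebasis R j) Ul.
  by rewrite sum_mul_ebasis; split=> //; exact: Wcoef_gt0 (mu_sub_neq0 l Ul).
- exact: sum_Wcoef (Ordinal n_gt0) (mu_sub_neq0 l Ul).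
- exact: Wcoef_barycenter (Ordinal n_gt0) (mu_sub_neq0 l Ul) (mu_in_gap hk Ul).2.
Qed.
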